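(* Let $G$ be a connected graph. (a) $O_{\rm SR}(G)=\mathcal{M}$ if and only if $G_{\rm SR}\cong xK_2$ for some positive integer $x$. (b) Let $H\in\{C_3,P_3,P_4,P_5\}$. If $G_{\rm SR}\cong H\cup xK_2$ (disjoint union) for some integer $x\ge 0$, then $O_{\rm SR}(G)=\mathcal{N}$. (c) Let $H^*\in\{K_m, C_m, P_{m+2}, xC_3\cup yP_3\}$, where $m\ge 4$ and $x+y\ge 2$. If $G_{\rm SR}$ contains $H^*$ as a subgraph, then $O_{\rm SR}(G)=\mathcal{B}$.
   Context: All graphs are finite, simple and undirected; $d(x,y)$ is the shortest-path distance. $P_n,C_n,K_n$ denote path, cycle and complete graph on $n$ vertices; $xK_2$ is the disjoint union of $x$ copies of $K_2$ and $\cup$ denotes disjoint union. A set $S\subseteq V(G)$ is a strong resolving set of a connected graph $G$ if for all distinct $x,y\in V(G)$ there exists $z\in S$ such that $x$ lies on a $y$–$z$ geodesic or $y$ lies on an $x$–$z$ geodesic. A vertex $u$ is maximally distant from $v$ if $d(u,v)\ge d(w,v)$ for every neighbor $w$ of $u$; $u,v$ are mutually maximally distant (MMD) if each is maximally distant from the other. The strong resolving graph $G_{\rm SR}$ has vertex set $\{x: x\text{ is MMD with some }y\}$ and edges exactly the MMD pairs. The Maker–Breaker strong resolving game on $G$: Maker and Breaker alternately select a not-yet-chosen vertex of $G$; Maker wins if the vertices he selects contain a strong resolving set of $G$, Breaker wins otherwise. In the M-game Maker moves first, in the B-game Breaker moves first. $O_{\rm SR}(G)=\mathcal{M}$ if Maker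 has a winning strategy in both games, $\mathcal{B}$ if Breaker has a winning strategy in both, and $\mathcal{N}$ if the first player has a winning strategy in each. *)

From mathcomp Require Import all_boot.
Set Implicit Arguments. Unset Strict Implicit. Unset Printing Implicit Defensive.

Section Graphs.
Variable T : finType.
Variable e : rel T.

Definition simple_graph := symmetric e /\ irreflexive e.
Definition connected_graph := forall x y : T, connect e x y.

Fixpoint ball (k : nat) (x : T) : {set T} :=
  match k with
  | 0 => [set x]
  | k'.+1 => ball k' x :|: [set w | [exists u in ball k' x, e u w]]
  end.

(* shortest-path distance (meaningful for connected graphs; #|T| otherwise) *)
Definition dist (x y : T) : nat := find (fun k => y \in ball k x) (iota 0 #|T|).

Definition on_geodesic (y x z : T) : bool := dist y x + dist x z == dist y z.

Definition strong_resolving (S : {set T}) : bool :=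
  [forall x, forall y, (x != y) ==>
     [exists z in S, on_geodesic y x z || on_geodesic x y z]].

Definition max_distant (u v : T) : bool :=
  [forall w, e u w ==> (dist w v <= dist u v)].

Definition MMD (u v : T) : bool := [&& u != v, max_distant u v & max_distant v u].

(* the strong resolving graph G_SR: vertex set V_SR, edge relation MMD *)
Definition V_SR : {set T} := [set x | [exists y, MMD x y]].

(* Maker-Breaker strong resolving game. M = Maker's vertices, B = Breaker's.
   win k maker_turn M B : Maker (can force a) win from this position. *)
Definition maker_goal (M : {set T}) : bool :=
  [exists S : {set T}, (S \subset M) && strong_resolving S].

Fixpoint maker_wins (k : nat) (maker_turn : bool) (M B : {set T}) : bool :=
  let F := ~: (M :|: B) in
  match k with
  | 0 => maker_goal M
  | k'.+1 =>
    if F == set0 then maker_goal M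
    else if maker_turn then [exists v in F, maker_wins k' false (v |: M) B]
    else [forall v in F, maker_wins k' true M (v |: B)]
  end.

Definition maker_wins_M_game : bool := maker_wins #|T| true set0 set0.
Definition maker_wins_B_game : bool := maker_wins #|T| false set0 set0.
End Graphs.

Inductive outcome := Outcome_M | Outcome_B | Outcome_N | Outcome_P.

(* the game is finite and determined: Breaker wins iff Maker does not *)
Definition O_SR (T : finType) (e : rel T) : outcome :=
  match maker_wins_M_game e, maker_wins_B_game e with
  | true, true => Outcome_M
  | false, false => Outcome_B
  | true, false => Outcome_N
  | false, true => Outcome_P
  end.

Definition path_rel (n : nat) : rel 'I_n :=
  fun i j => (i.+1 == j :> nat) || (j.+1 == i :> nat).
Definition cycle_rel (n : nat) : rel 'I_n :=
  fun i j => path_rel i j ||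
    ((i == 0 :> nat) && (j == n.-1 :> nat)) || ((j == 0 :> nat) && (i == n.-1 :> nat)).
Definition complete_rel (n : nat) : rel 'I_n := fun i j => i != j.
Definition matching_rel (x : nat) : rel ('I_x * bool) :=
  fun a b => (a.1 == b.1) && (a.2 != b.2).
Definition union_rel (A B : finType) (f : rel A) (g : rel B) : rel (A + B) :=
  fun a b => match a, b with
             | inl a', inl b' => f a' b'
             | inr a', inr b' => g a' b'
             | _, _ => false
             end.
Definition copies_rel (x : nat) (U : finType) (f : rel U) : rel ('I_x * U) :=
  fun a b => (a.1 == b.1) && f a.2 b.2.

Definition iso_to (T : finType) (V : {set T}) (e : rel T) (U : finType) (f : rel U) : Prop :=
  exists h : U -> T, [/\ injective h, forall t, t \in V <-> exists u, h u = t
                      & forall a b, f a b = e (h a) (h b)].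

Definition contains_subgraph (T : finType) (V : {set T}) (e : rel T) (U : finType) (f : rel U) : Prop :=
  exists h : U -> T, [/\ injective h, forall u, h u \in V
                      & forall a b, f a b -> e (h a) (h b)].

Arguments path_rel n : clear implicits.
Arguments cycle_rel n : clear implicits.
Arguments complete_rel n : clear implicits.
Arguments matching_rel x : clear implicits.
Arguments copies_rel x {U} f.

From mathcomp Require Import all_boot zify.
Set Implicit Arguments. Unset Strict Implicit. Unset Printing Implicit Defensive.

(* A set is strong resolving iff it meets every edge of G_SR: if u and v are mutually
   maximally distant, no geodesic from v passes through u and goes on, so the set must contain
   u or v; conversely any two distinct vertices lie on geodesics between the ends of some MMD
   pair. The game is therefore the Maker-Breaker vertex-cover game on G_SR. Breaker wins as
   soon as he can claim the centre of an unclaimed P_3 and then whichever leaf Maker left.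
   Maker wins by pairing as long as every uncovered edge is unclaimed and meets no other
   uncovered edge. So G_SR = xK_2 gives M; for G_SR = H + xK_2 with H in {C_3, P_3, P_4, P_5},
   Breaker starts on the P_3 inside H while Maker starts by claiming the vertex of H whose
   removal leaves a matching; and in (c) every vertex of H* misses some P_3 of H*. *)

Definition vertex_cover (T : finType) (g : rel T) (S : {set T}) : bool :=
  [forall u, forall v, g u v ==> (u \in S) || (v \in S)].

Definition cherry (T : finType) (g : rel T) (a b c : T) : bool :=
  [&& g a b, g a c & b != c].

Definition has_cherry_avoiding (T : finType) (g : rel T) (v : T) : Prop :=
  exists a b c, cherry g a b c && (v \notin [:: a; b; c]).

Definition deg_le1_off (T : finType) (g : rel T) (C : {set T}) : Prop := forall a b d,
  g a b -> g a d -> a \notin C -> b \notin C -> (d \in C) || (d == b).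

Definition nonisolated (T : finType) (g : rel T) : {set T} := [set u | [exists v, g u v]].

Section StrongResolving.
Variables (T : finType) (e : rel T).
Hypothesis esym : symmetric e.
Hypothesis econ : connected_graph e.

Lemma ballS k x y :
  (y \in ball e k.+1 x) = (y \in ball e k x) || [exists u in ball e k x, e u y].
Proof. by rewrite /= !inE. Qed.

Lemma ball_mono i j x : i <= j -> ball e i x \subset ball e j x.
Proof.
move=> /subnK <-; elim: (j - i) => [|d IH] //=.
by apply: subset_trans IH _; rewrite subsetUl.
Qed.

Lemma ball_trans i j x y z :
  y \in ball e i x -> z \in ball e j y -> z \in ball e (i + j) x.
Proof.
move=> Hy; elim: j z => [|j IH] z; first by rewrite addn0 /= inE => /eqP ->.
rewrite ballS addnS ballS => /orP[/IH -> //|/existsP[u /andP[Hu Huz]]].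
by apply/orP; right; apply/existsP; exists u; rewrite IH.
Qed.

Lemma ball1_edge u y : e u y -> y \in ball e 1 u.
Proof.
by move=> H; rewrite ballS; apply/orP; right; apply/existsP; exists u; rewrite /= inE eqxx.
Qed.

Lemma ball_sym k x y : y \in ball e k x -> x \in ball e k y.
Proof.
elim: k y => [|k IH] y; first by rewrite /= !inE eq_sym.
rewrite ballS => /orP[/IH H|/existsP[u /andP[Hu Huy]]].
  exact: (subsetP (ball_mono _ _)) H.
have Hyu : u \in ball e 1 y by apply: ball1_edge; rewrite esym.
by have := ball_trans Hyu (IH _ Hu); rewrite add1n.
Qed.

Lemma path_ball x p : path e x p -> last x p \in ball e (size p) x.
Proof.
elim: p x => [|a p IH] x /=; first by rewrite inE.
by case/andP=> /ball1_edge Hxa /IH; move/(ball_trans Hxa); rewrite add1n.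
Qed.

Lemma ball_full x y : y \in ball e #|T|.-1 x.
Proof.
have /connectP[p Hp ->] := econ x y.
case/shortenP: Hp => p' Hp' Hu _.
have Hs : size p' <= #|T|.-1.
  by have := max_card (mem (x :: p')); rewrite (card_uniqP Hu) /=; lia.
exact: (subsetP (ball_mono _ Hs)) (path_ball Hp').
Qed.

Lemma dist_lt x y : dist e x y < #|T|.
Proof.
have Hn : 0 < #|T| by apply/card_gt0P; exists x.
rewrite -(size_iota 0 #|T|) -has_find; apply/hasP; exists #|T|.-1.
  by rewrite mem_iota; lia.
exact: ball_full.
Qed.

Lemma dist_leqP x y k : (dist e x y <= k) = (y \in ball e k x).
Proof.
have Hlt := dist_lt x y.
apply/idP/idP => H.
  have Hh : has (fun k => y \in ball e k x) (iota 0 #|T|) by rewrite has_find size_iota.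
  have := nth_find 0 Hh; rewrite -/(dist e x y) nth_iota // add0n.
  exact: (subsetP (ball_mono _ H)).
case: (leqP (dist e x y) k) => // Hk; case: (ltnP k #|T|) => Hkn; last lia.
by have := before_find 0 Hk; rewrite nth_iota // add0n /= H.
Qed.

Lemma dist_sym x y : dist e x y = dist e y x.
Proof.
by apply/eqP; rewrite eqn_leq !dist_leqP; apply/andP; split; apply: ball_sym; rewrite -dist_leqP.
Qed.

Lemma dist_triangle x y z : dist e x z <= dist e x y + dist e y z.
Proof. by rewrite dist_leqP; apply: ball_trans; rewrite -dist_leqP. Qed.

Lemma dist_eq0 x y : (dist e x y == 0) = (x == y).
Proof. by rewrite -leqn0 dist_leqP /= inE eq_sym. Qed.

Lemma distxx x : dist e x x = 0.
Proof. by apply/eqP; rewrite dist_eq0. Qed.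

Lemma dist_edge x u w : e u w -> dist e x w <= (dist e x u).+1.
Proof.
move=> H; rewrite dist_leqP ballS; apply/orP; right; apply/existsP; exists u.
by rewrite -dist_leqP leqnn.
Qed.

Lemma dist_step x z : x != z -> exists2 w, e x w & (dist e w z).+1 = dist e x z.
Proof.
move=> Hxz; have : 0 < dist e z x by rewrite lt0n dist_eq0 eq_sym.
case Ed: (dist e z x) => [|d] // _.
move: (leqnn d.+1); rewrite -{1}Ed dist_leqP ballS.
case/orP=> [|/existsP[u /andP[Hu Hux]]]; first by rewrite -dist_leqP; lia.
exists u; first by rewrite esym.
have := dist_edge z Hux; rewrite -dist_leqP in Hu; rewrite (dist_sym u z) (dist_sym x z); lia.
Qed.


Lemma MMD_sym : symmetric (MMD e).
Proof. by move=> u v; rewrite /MMD eq_sym; case: (v != u) => //=; rewrite andbC. Qed.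

Lemma MMD_irr : irreflexive (MMD e).
Proof. by move=> u; rewrite /MMD eqxx. Qed.

Lemma max_distant_geodesic u v z :
  on_geodesic e v u z -> max_distant e u v -> z = u.
Proof.
move=> /eqP Hg /forallP Hm; apply/eqP; apply: contraT; rewrite eq_sym => Huz.
have [w Huw Hw] := dist_step Huz.
have := Hm w; rewrite Huw /= (dist_sym w v) (dist_sym u v) => Hle.
by have := dist_triangle v w z; lia.
Qed.

Lemma strong_resolving_cover S : strong_resolving e S -> vertex_cover (MMD e) S.
Proof.
move=> /forallP HS; apply/forallP => u; apply/forallP => v; apply/implyP => /and3P[Huv Hu Hv].
have /forallP/(_ v) := HS u; rewrite Huv /= => /existsP[z /andP[Hz /orP[]]].
  by move/max_distant_geodesic/(_ Hu) => Ez; rewrite -Ez Hz.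
by move/max_distant_geodesic/(_ Hv) => Ez; rewrite -Ez Hz orbT.
Qed.

Lemma far_on_geodesic a b : exists2 c, on_geodesic e a b c & max_distant e c a.
Proof.
have Hb : on_geodesic e a b b by rewrite /on_geodesic distxx addn0.
case: (arg_maxnP (fun c => dist e a c) Hb) => c Hc Hmax.
exists c => //; apply/forallP => w; apply/implyP => Hcw; rewrite leqNgt; apply/negP => Hlt.
rewrite (dist_sym w a) (dist_sym c a) in Hlt.
suff /Hmax : on_geodesic e a b w by lia.
move: Hc; rewrite /on_geodesic => /eqP Hc.
by have := dist_edge b Hcw; have := dist_triangle a b w; move=> h1 h2; apply/eqP; lia.
Qed.

Lemma MMD_geodesics x y : x != y ->
  exists u v, [/\ MMD e u v, on_geodesic e y x u & on_geodesic e x y v].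
Proof.
move=> Hxy.
have [u /eqP Hu Hmu] := far_on_geodesic y x.
have [v /eqP Hv Hmv] := far_on_geodesic u y.
have Hd : 0 < dist e x y by rewrite lt0n dist_eq0.
have Ht1 := dist_triangle u x v; have Ht2 := dist_triangle x y v.
rewrite (dist_sym u x) (dist_sym y x) (dist_sym u y) in Hu Ht1 Hv Ht2.
exists u, v; split; last by apply/eqP; lia.
- apply/and3P; split => //.
  + by apply/negP => /eqP Euv; subst v; rewrite distxx in Hv; lia.
  apply/forallP => w; apply/implyP => Huw; rewrite leqNgt; apply/negP => Hlt.
  move/forallP: Hmu => /(_ w); rewrite Huw /=.
  by have := dist_triangle w y v; rewrite (dist_sym w y) (dist_sym u y); lia.
- by apply/eqP; rewrite (dist_sym y x).
Qed.

Lemma cover_strong_resolving S : vertex_cover (MMD e) S -> strong_resolving e S.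
Proof.
move=> /forallP HS; apply/forallP => x; apply/forallP => y; apply/implyP => Hxy.
have [u [v [Huv Hu Hv]]] := MMD_geodesics Hxy.
have /forallP/(_ v) := HS u; rewrite Huv /= => /orP[] H; apply/existsP.
  by exists u; rewrite H Hu.
by exists v; rewrite H Hv orbT.
Qed.

Lemma maker_goalE M : maker_goal e M = vertex_cover (MMD e) M.
Proof.
apply/existsP/idP => [[S /andP[HSM /strong_resolving_cover HS]]|HM].
  apply/forallP => u; apply/forallP => v; apply/implyP => /(implyP (forallP (forallP HS u) v)).
  by case/orP => /(subsetP HSM) ->; rewrite ?orbT.
by exists M; rewrite subxx cover_strong_resolving.
Qed.

End StrongResolving.

Section CoverGame.
Variables (T : finType) (g : rel T).
Hypothesis gsym : symmetric g.
Hypothesis girr : irreflexive g.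

Fixpoint cover_game (k : nat) (maker_turn : bool) (M B : {set T}) : bool :=
  let F := ~: (M :|: B) in
  match k with
  | 0 => vertex_cover g M
  | k'.+1 =>
    if F == set0 then vertex_cover g M
    else if maker_turn then [exists v in F, cover_game k' false (v |: M) B]
    else [forall v in F, cover_game k' true M (v |: B)]
  end.

Lemma setCU1l (M B : {set T}) v : ~: ((v |: M) :|: B) = ~: (M :|: B) :\ v.
Proof. by apply/setP => z; rewrite !inE; case: (z == v); rewrite ?orbT ?andbF. Qed.

Lemma setCU1r (M B : {set T}) v : ~: (M :|: (v |: B)) = ~: (M :|: B) :\ v.
Proof. by apply/setP => z; rewrite !inE; case: (z == v); rewrite ?orbT ?andbF. Qed.

Lemma free_neq0 (M B : {set T}) v : v \notin M :|: B -> (~: (M :|: B) == set0) = false.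
Proof. by move=> Hv; apply/negbTE/set0Pn; exists v; rewrite inE. Qed.

Lemma size_le_card (s : seq T) : uniq s -> size s <= #|T|.
Proof. by move=> Hs; rewrite -(card_uniqP Hs) max_card. Qed.

Lemma cherry_uniq a b c : cherry g a b c -> uniq [:: a; b; c].
Proof.
case/and3P=> Hab Hac Hbc; rewrite /= !inE negb_or Hbc !andbT.
by apply/andP; split; [move: Hab | move: Hac]; apply: contraTneq => ->; rewrite girr.
Qed.

Lemma breaker_claimed_edge k t (M B : {set T}) a b :
  g a b -> a \in B -> b \in B -> a \notin M -> b \notin M -> ~~ cover_game k t M B.
Proof.
move=> Hab; have Hcov (M' : {set T}) : a \notin M' -> b \notin M' -> ~~ vertex_cover g M'.
  move=> HaM HbM; apply/negP => /forallP/(_ a)/forallP/(_ b).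
  by rewrite Hab (negbTE HaM) (negbTE HbM).
elim: k t M B => [|k IH] t M B HaB HbB HaM HbM /=; first exact: Hcov.
case: ifP => [_|/negbT/set0Pn[v0 Hv0]]; first exact: Hcov.
case: t; last first.
  apply/negP => /forallP/(_ v0); rewrite Hv0; apply/negP.
  by apply: IH; rewrite // inE ?HaB ?HbB orbT.
apply/negP => /existsP[v /andP[Hv]]; apply/negP.
apply: IH => //; rewrite !inE negb_or ?HaM ?HbM andbT.
  by apply/eqP => Eav; move: Hv; rewrite -Eav !inE HaB orbT.
by apply/eqP => Ebv; move: Hv; rewrite -Ebv !inE HbB orbT.
Qed.

(* Breaker claims the centre [a]; Maker can then block only one of [b], [c]. *)
Lemma breaker_cherry_wins k (M B : {set T}) a b c :
  cherry g a b c -> a \notin M :|: B -> b \notin M :|: B -> c \notin M :|: B ->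
  ~~ cover_game k.+3 false M B.
Proof.
case/and3P=> Hab Hac Hbc Ha Hb Hc.
have Hab' : a != b by apply: contraTneq Hab => ->; rewrite girr.
have Hac' : a != c by apply: contraTneq Hac => ->; rewrite girr.
rewrite /= (free_neq0 Ha); apply/negP => /forallP/(_ a); rewrite inE Ha /=.
have Hb' : b \notin M :|: (a |: B) by rewrite setUCA in_setU1 negb_or eq_sym Hab'.
rewrite (free_neq0 Hb') => /existsP[v /andP[+ Hgame]].
rewrite !inE !negb_or => /and3P[HvM Hva HvB].
have [d [Had Hdv Hd]] : exists d, [/\ g a d, d != v & d \notin M :|: B].
  by case: (eqVneq b v) => [Ebv|]; [exists c; rewrite -Ebv eq_sym | exists b].
have Had' : a != d by apply: contraTneq Had => ->; rewrite girr.
have Hd' : d \notin (v |: M) :|: (a |: B).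
  by move: Hd; rewrite !inE !negb_or (eq_sym d a) Had' Hdv.
move: Hgame; rewrite /= (free_neq0 Hd') => /forallP/(_ d); rewrite inE Hd' /=; apply/negP.
apply: (breaker_claimed_edge _ _ Had); rewrite ?inE ?eqxx ?orbT //.
- by move: Ha; rewrite !inE !negb_or eq_sym Hva => /andP[].
- by move: Hd'; rewrite !inE !negb_or => /andP[].
Qed.

(* Every edge not covered by Maker is still unclaimed and is the only uncovered edge at
   either end, so Maker can answer a claim of one end by claiming the other. *)
Definition pairing_position (M B : {set T}) : Prop := forall u v, g u v ->
  [|| u \in M, v \in M | [&& u \notin B, v \notin B & [forall w, g u w ==> (w \in M) || (w == v)]]].

Lemma pairing_position_setU1 (M B : {set T}) x :
  pairing_position M B -> pairing_position (x |: M) B.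
Proof.
move=> H u v /H; rewrite !inE.
case/or3P => [->|->|/and3P[-> -> /forallP Hw]]; rewrite ?orbT //=.
rewrite !orbA; apply/orP; right; apply/forallP => w; apply/implyP => /(implyP (Hw w)).
by rewrite inE; case/orP => ->; rewrite ?orbT.
Qed.

Lemma pairing_position_cover (M B : {set T}) :
  pairing_position M B -> ~: (M :|: B) = set0 -> vertex_cover g M.
Proof.
move=> H HF; apply/forallP => u; apply/forallP => v; apply/implyP => /H.
case/or3P => [->|->|/and3P[Hu _ _]] //; rewrite ?orbT //.
case: (boolP (u \in M)) => // HuM.
have : u \in ~: (M :|: B) by rewrite !inE negb_or HuM.
by rewrite HF inE.
Qed.

Lemma pairing_position_answer (M B : {set T}) v w :
  pairing_position M B -> g v w -> v \notin M -> w \notin M ->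
  pairing_position (w |: M) (v |: B).
Proof.
move=> H Hvw HvM HwM.
have := H v w Hvw; rewrite (negbTE HvM) (negbTE HwM) /= => /and3P[_ _ /forallP Hv].
move=> a b Hab; rewrite !inE.
case: (eqVneq a w) => //= Haw; case: (boolP (a \in M)) => //= HaM.
case: (eqVneq b w) => //= Hbw; case: (boolP (b \in M)) => //= HbM.
have := H a b Hab; rewrite (negbTE HaM) (negbTE HbM) /= => /and3P[HaB HbB /forallP Ha].
have Hav : a != v.
  by apply: contraTneq (Hv b) => Eav; rewrite -Eav Hab (negbTE HbM) (negbTE Hbw).
have Hbv : b != v.
  by apply: contraTneq (Hv a) => Ebv; rewrite -Ebv gsym Hab (negbTE HaM) (negbTE Haw).
rewrite !negb_or Hav Hbv HaB HbB /=; apply/forallP => z; apply/implyP => /(implyP (Ha z)).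
by rewrite inE; case/orP => ->; rewrite ?orbT.
Qed.

Lemma pairing_position_unmatched (M B : {set T}) v :
  pairing_position M B -> (forall w, g v w -> (v \in M) || (w \in M)) ->
  pairing_position M (v |: B).
Proof.
move=> H Hv a b Hab; case: (boolP (a \in M)) => //= HaM; case: (boolP (b \in M)) => //= HbM.
have := H a b Hab; rewrite (negbTE HaM) (negbTE HbM) /= => /and3P[HaB HbB ->].
rewrite !inE !negb_or HaB HbB !andbT; apply/andP; split; apply/eqP => Ev; subst v.
  by have := Hv _ Hab; rewrite (negbTE HaM) (negbTE HbM).
by rewrite gsym in Hab; have := Hv _ Hab; rewrite (negbTE HaM) (negbTE HbM).
Qed.

Lemma pairing_position_wins k (M B : {set T}) :
  pairing_position M B -> #|~: (M :|: B)| <= k ->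
  cover_game k true M B && cover_game k false M B.
Proof.
elim/ltn_ind: k M B => -[|k] IH M B HP Hk.
  have HF : ~: (M :|: B) = set0 by apply/eqP; rewrite -cards_eq0; lia.
  by rewrite /= (pairing_position_cover HP HF).
rewrite /=; case: (eqVneq (~: (M :|: B)) set0) => [HF|/set0Pn[v0 Hv0]].
  by rewrite (pairing_position_cover HP HF).
have Hk' v : v \in ~: (M :|: B) -> #|~: (M :|: B) :\ v| <= k.
  by move=> Hv; move: Hk; rewrite (cardsD1 v) Hv.
apply/andP; split.
  apply/existsP; exists v0; rewrite Hv0 /=.
  have HP' := pairing_position_setU1 v0 HP.
  have Hc : #|~: ((v0 |: M) :|: B)| <= k by rewrite setCU1l Hk'.
  by case/andP: (IH k (ltnSn k) _ _ HP' Hc).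
apply/forallP => v; apply/implyP => Hv.
have HvM : v \notin M by move: Hv; rewrite !inE negb_or => /andP[].
case: (boolP [exists w, g v w && (w \notin M)]) => [/existsP[w /andP[Hvw HwM]]|Hno].
  have HP' := pairing_position_answer HP Hvw HvM HwM.
  have := HP v w Hvw; rewrite (negbTE HvM) (negbTE HwM) /= => /and3P[_ HwB _].
  have Hwv : w != v by apply: contraTneq Hvw => ->; rewrite girr.
  have HwF : w \notin M :|: (v |: B) by rewrite setUCA in_setU1 negb_or Hwv in_setU negb_or HwM.
  have Hkw : #|~: ((w |: M) :|: (v |: B))| < k.
    have := Hk' _ Hv; rewrite setCU1l setCU1r (cardsD1 w (_ :\ v)) -setCU1r in_setC HwF.
    by rewrite add1n.
  case: k IH Hk Hk' Hkw => [|k] // IH _ _ Hkw.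
  rewrite /= (free_neq0 HwF); apply/existsP; exists w; rewrite in_setC HwF /=.
  by case/andP: (IH k (ltnW (ltnSn k)) _ _ HP' Hkw).
have HP' : pairing_position M (v |: B).
  apply: (pairing_position_unmatched HP) => w Hvw; rewrite (negbTE HvM) /=.
  by apply: contraNT Hno => HwM; apply/existsP; exists w; rewrite Hvw.
have Hc : #|~: (M :|: (v |: B))| <= k by rewrite setCU1r Hk'.
by case/andP: (IH k (ltnSn k) _ _ HP' Hc).
Qed.

Lemma deg_le1_off_pairing C : deg_le1_off g C -> pairing_position C set0.
Proof.
move=> H u v Huv; rewrite !inE /=.
case: (boolP (u \in C)) => //= Hu; case: (boolP (v \in C)) => //= Hv.
by apply/forallP => w; apply/implyP => Huw; exact: H Huv Huw Hu Hv.
Qed.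

End CoverGame.

Section Embeddings.
Variables (T U : finType) (g : rel T) (f : rel U).
Hypothesis gsym : symmetric g.

Lemma contains_cherry V a b c :
  contains_subgraph V g f -> cherry f a b c -> exists a b c, cherry g a b c.
Proof.
case=> h [Hi _ Hf] /and3P[Hab Hac Hbc]; exists (h a), (h b), (h c).
by rewrite /cherry !Hf // (inj_eq Hi).
Qed.

Lemma contains_cherry_avoiding V (u0 : U) :
  contains_subgraph V g f -> (forall u, has_cherry_avoiding f u) ->
  forall v, has_cherry_avoiding g v.
Proof.
case=> h [Hi _ Hf] Hav v.
have [u Hu|Hv] := pickP (fun u => h u == v).
  have [a [b [c /andP[/and3P[Hab Hac Hbc] Ha]]]] := Hav u.
  exists (h a), (h b), (h c); rewrite /cherry !Hf // (inj_eq Hi) Hbc -(eqP Hu) /=.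
  by move: Ha; rewrite -(mem_map Hi).
have [a [b [c /andP[/and3P[Hab Hac Hbc] _]]]] := Hav u0.
exists (h a), (h b), (h c); rewrite /cherry !Hf // (inj_eq Hi) Hbc /=.
by rewrite !inE !(eq_sym v) !Hv.
Qed.

Lemma iso_contains V : iso_to V g f -> contains_subgraph V g f.
Proof.
by case=> h [Hi Him Hf]; exists h; split=> // [u|a b]; [apply/Him; exists u | rewrite Hf].
Qed.

Lemma iso_deg_le1_off C :
  iso_to (nonisolated g) g f -> deg_le1_off f C ->
  exists2 C' : {set T}, #|C'| = #|C| & deg_le1_off g C'.
Proof.
case=> h [Hi Him Hf] HC; exists (h @: C); first exact: card_imset.
have Himg t u : g t u -> exists a, h a = t.
  by move=> Htu; apply/Him; rewrite inE; apply/existsP; exists u.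
move=> t u w Htu Htw; have [a Ea] := Himg _ _ Htu.
have [b Eb] : exists b, h b = u by apply: (Himg _ t); rewrite gsym.
have [d Ed] : exists d, h d = w by apply: (Himg _ t); rewrite gsym.
subst t u w; rewrite -!Hf in Htu Htw.
by rewrite !mem_imset // (inj_eq Hi); apply: HC.
Qed.

End Embeddings.

Section PerfectMatching.
Variables (T : finType) (g : rel T).
Hypothesis gsym : symmetric g.
Hypothesis girr : irreflexive g.
Hypothesis g_deg1 : forall a b c, g a b -> g a c -> b = c.

Definition partner (u : T) : T := odflt u [pick w | g u w].

Lemma partnerE u w : g u w -> partner u = w.
Proof. by rewrite /partner; case: pickP => [w' Hw' /(g_deg1 Hw')|H] //=; rewrite H. Qed.

Lemma partner_edge u : u \in nonisolated g -> g u (partner u).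
Proof. by rewrite inE => /existsP[w Huw]; rewrite (partnerE Huw). Qed.

Lemma partnerK u : u \in nonisolated g -> partner (partner u) = u.
Proof. by move/partner_edge => Hu; apply: partnerE; rewrite gsym. Qed.

Lemma nonisolated_edgeE u w : u \in nonisolated g -> g u w = (w == partner u).
Proof.
move/partner_edge => Hu; apply/idP/eqP => [/partnerE -> //|->]; exact: Hu.
Qed.

(* One endpoint per edge, used to index the edges. *)
Definition lower : {set T} := [set u in nonisolated g | enum_rank u < enum_rank (partner u)].

Lemma in_lower u : (u \in lower) = (u \in nonisolated g) && (enum_rank u < enum_rank (partner u)).
Proof. by rewrite [in LHS]inE. Qed.

Lemma lower_nonisolated u : u \in lower -> u \in nonisolated g.
Proof. by rewrite in_lower => /andP[]. Qed.

Lemma partner_nonisolated u : u \in nonisolated g -> partner u \in nonisolated g.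
Proof. by move/partner_edge => Hu; rewrite inE; apply/existsP; exists u; rewrite gsym. Qed.

Lemma lower_partner u : u \in lower -> partner u \notin lower.
Proof.
move=> Hu; have Hm := lower_nonisolated Hu; move: Hu.
by rewrite !in_lower partnerK // => /andP[_ Hlt]; apply/negP => /andP[_]; rewrite ltnNge ltnW.
Qed.

Lemma nonisolated_lower u : u \in nonisolated g -> (u \in lower) || (partner u \in lower).
Proof.
move=> Hu; rewrite !in_lower Hu partner_nonisolated // partnerK //=.
have : enum_rank u != enum_rank (partner u).
  by apply: contraTneq (partner_edge Hu) => /enum_rank_inj <-; rewrite girr.
by rewrite neq_ltn.
Qed.

Definition match_vertex (ib : 'I_#|lower| * bool) : T :=
  if ib.2 then partner (enum_val ib.1) else enum_val ib.1.

Lemma match_vertex_nonisolated ib : match_vertex ib \in nonisolated g.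
Proof.
have Hm := lower_nonisolated (enum_valP ib.1).
by rewrite /match_vertex; case: ib.2; rewrite ?partner_nonisolated.
Qed.

Lemma match_vertex_partner i b : partner (match_vertex (i, b)) = match_vertex (i, ~~ b).
Proof. by rewrite /match_vertex; case: b; rewrite //= partnerK // lower_nonisolated ?enum_valP. Qed.

Lemma match_vertex_inj : injective match_vertex.
Proof.
move=> [i b] [j c]; rewrite /match_vertex /=.
have Li := enum_valP i; have Lj := enum_valP j.
case: b; case: c => E.
- move: (partnerK (lower_nonisolated Li)).
  by rewrite E partnerK ?lower_nonisolated // => /enum_val_inj ->.
- by move: (lower_partner Li); rewrite E Lj.
- by move: (lower_partner Lj); rewrite -E Li.
- by rewrite (enum_val_inj E).
Qed.

Lemma matching_iso u0 v0 : g u0 v0 -> exists x, 0 < x /\ iso_to (nonisolated g) g (matching_rel x).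
Proof.
move=> H0; exists #|lower|; split.
  have Hm : u0 \in nonisolated g by rewrite inE; apply/existsP; exists v0.
  rewrite card_gt0; apply/set0Pn.
  by case/orP: (nonisolated_lower Hm) => H; [exists u0 | exists (partner u0)].
exists match_vertex; split; first exact: match_vertex_inj.
- move=> t; split => [Ht|[ib <-]]; last exact: match_vertex_nonisolated.
  case/orP: (nonisolated_lower Ht) => HL.
    by exists (enum_rank_in HL t, false); rewrite /match_vertex /= enum_rankK_in.
  exists (enum_rank_in HL (partner t), true).
  by rewrite /match_vertex /= enum_rankK_in // partnerK.
- move=> [i b] [j c]; rewrite nonisolated_edgeE ?match_vertex_nonisolated // match_vertex_partner.
  by rewrite (inj_eq match_vertex_inj) /matching_rel /= xpair_eqE eq_sym; case: b; case: c.
Qed.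

End PerfectMatching.

Lemma matching_rel_uniq x a b d : matching_rel x a b -> matching_rel x a d -> d = b.
Proof.
case: a b d => [i s] [j t] [k r]; rewrite /matching_rel /= => /andP[/eqP <- Hst] /andP[/eqP <- Hsr].
by congr pair; move: Hst Hsr; case: s; case: t; case: r.
Qed.

Lemma matching_deg_le1_off x : deg_le1_off (matching_rel x) set0.
Proof. by move=> a b d Hab Had _ _; rewrite (matching_rel_uniq Hab Had) eqxx orbT. Qed.

Lemma union_matching_deg_le1_off (U : finType) (f : rel U) x c :
  deg_le1_off f [set c] -> deg_le1_off (union_rel f (matching_rel x)) [set inl c].
Proof.
move=> Hf [a|a] [b|b] [d|d] //= Hab Had; rewrite !inE.
  by have := Hf _ _ _ Hab Had; rewrite !inE => H; exact: H.
by rewrite (matching_rel_uniq Hab Had) eqxx orbT.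
Qed.

Lemma union_cherry_inl (A B : finType) (F : rel A) (G : rel B) a b c :
  cherry F a b c -> cherry (union_rel F G) (inl a) (inl b) (inl c).
Proof. by []. Qed.

Lemma copies_cherry (U : finType) (f : rel U) x (i : 'I_x) a b c :
  cherry f a b c -> cherry (copies_rel x f) (i, a) (i, b) (i, c).
Proof. by case/and3P=> Hab Hac Hbc; rewrite /cherry /copies_rel /= eqxx Hab Hac xpair_eqE eqxx. Qed.

Lemma copies_cherry_avoiding (U : finType) (f : rel U) x a b c :
  1 < x -> cherry f a b c -> forall u, has_cherry_avoiding (copies_rel x f) u.
Proof.
move=> Hx Habc [i t]; have [k Hk] : exists k : 'I_x, k != i.
  have Hx0 : 0 < x by apply: ltnW.
  case: (eqVneq i (Ordinal Hx0)) => [->|Hi]; last by exists (Ordinal Hx0); rewrite eq_sym.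
  by exists (Ordinal Hx).
exists (k, a), (k, b), (k, c); rewrite copies_cherry //=.
by rewrite !inE !xpair_eqE !(eq_sym i) (negbTE Hk).
Qed.

Lemma union_cherry_avoiding_inl (A B : finType) (F : rel A) (G : rel B) p :
  has_cherry_avoiding F p \/ (exists a b c, cherry G a b c) ->
  has_cherry_avoiding (union_rel F G) (inl p).
Proof.
case=> [[a [b [c H]]]|[a [b [c H]]]]; first by exists (inl a), (inl b), (inl c).
by exists (inr a), (inr b), (inr c); apply/andP; split; first exact: H.
Qed.

Lemma union_cherry_avoiding_inr (A B : finType) (F : rel A) (G : rel B) q :
  has_cherry_avoiding G q \/ (exists a b c, cherry F a b c) ->
  has_cherry_avoiding (union_rel F G) (inr q).
Proof.
case=> [[a [b [c H]]]|[a [b [c H]]]]; first by exists (inr a), (inr b), (inr c).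
by exists (inl a), (inl b), (inl c); apply/andP; split; first exact: H.
Qed.

Section StrongResolvingGame.
Variables (T : finType) (e : rel T).
Hypothesis esym : symmetric e.
Hypothesis econ : connected_graph e.

Lemma maker_winsE k t M B : maker_wins e k t M B = cover_game (MMD e) k t M B.
Proof.
elim: k t M B => [|k IH] t M B /=; rewrite maker_goalE //.
by case: ifP => // _; case: t; [apply: eq_existsb => v | apply: eq_forallb => v]; rewrite IH.
Qed.

Lemma breaker_wins_B_game a b c : cherry (MMD e) a b c -> ~~ maker_wins_B_game e.
Proof.
move=> Habc; have := size_le_card (cherry_uniq (MMD_irr e) Habc).
rewrite /maker_wins_B_game maker_winsE; case: #|T| => [|[|[|n]]] // _.
by apply: (breaker_cherry_wins (MMD_irr e) n Habc); rewrite setU0 inE.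
Qed.

Lemma breaker_wins_M_game (x0 : T) :
  (forall v, has_cherry_avoiding (MMD e) v) -> ~~ maker_wins_M_game e.
Proof.
move=> Hav; have [a [b [c /andP[Habc Hx0]]]] := Hav x0.
have /size_le_card : uniq [:: x0; a; b; c] by rewrite cons_uniq Hx0 (cherry_uniq (MMD_irr e) Habc).
rewrite /maker_wins_M_game maker_winsE; case: #|T| => [|[|[|[|n]]]] // _.
have Ha : a \notin set0 :|: set0 by rewrite setU0 inE.
rewrite /= (free_neq0 Ha); apply/negP => /existsP[v /andP[_]]; apply/negP.
have [a' [b' [c' /andP[H' Hv]]]] := Hav v.
move: Hv; rewrite !inE !negb_or => /and3P[Ha' Hb' Hc'].
by apply: (breaker_cherry_wins (MMD_irr e) n H'); rewrite !inE ?orbF eq_sym.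
Qed.

Lemma maker_wins_both :
  pairing_position (MMD e) set0 set0 -> maker_wins_M_game e && maker_wins_B_game e.
Proof.
move=> HP; rewrite /maker_wins_M_game /maker_wins_B_game !maker_winsE.
by apply: (pairing_position_wins (MMD_sym e) (MMD_irr e) HP); rewrite max_card.
Qed.

Lemma maker_wins_M_game_claiming c :
  pairing_position (MMD e) [set c] set0 -> maker_wins_M_game e.
Proof.
move=> HP; rewrite /maker_wins_M_game maker_winsE.
have Hc : c \notin set0 :|: set0 by rewrite setU0 inE.
have : 0 < #|T| by apply/card_gt0P; exists c.
case En: #|T| => [|n] // _.
rewrite /= (free_neq0 Hc); apply/existsP; exists c; rewrite inE Hc /= setU0.
have Hn : #|~: ([set c] :|: set0)| <= n by rewrite setU0 cardsC1 En.
by case/andP: (pairing_position_wins (MMD_sym e) (MMD_irr e) HP Hn).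
Qed.

Lemma O_SR_M_of_iso (U : finType) (f : rel U) :
  iso_to (V_SR e) (MMD e) f -> deg_le1_off f set0 -> O_SR e = Outcome_M.
Proof.
move=> Hiso /(iso_deg_le1_off (MMD_sym e) Hiso)[C']; rewrite cards0 => /cards0_eq ->.
by move/deg_le1_off_pairing/maker_wins_both/andP=> [HM HB]; rewrite /O_SR HM HB.
Qed.

Lemma O_SR_N_of_iso (U : finType) (f : rel U) a b d c :
  iso_to (V_SR e) (MMD e) f -> cherry f a b d -> deg_le1_off f [set c] ->
  O_SR e = Outcome_N.
Proof.
move=> Hiso Hch /(iso_deg_le1_off (MMD_sym e) Hiso)[C' HC'].
have /cards1P[c' ->] : #|C'| == 1 by rewrite HC' cards1.
move/deg_le1_off_pairing/maker_wins_M_game_claiming => HM.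
have [a' [b' [d' /breaker_wins_B_game HB]]] := contains_cherry (iso_contains Hiso) Hch.
by rewrite /O_SR HM (negbTE HB).
Qed.

Lemma O_SR_N_of_union_matching (U : finType) (f : rel U) x a b d c :
  iso_to (V_SR e) (MMD e) (union_rel f (matching_rel x)) -> cherry f a b d ->
  deg_le1_off f [set c] -> O_SR e = Outcome_N.
Proof.
move=> Hiso Hch Hc.
exact: (O_SR_N_of_iso Hiso (union_cherry_inl _ Hch) (union_matching_deg_le1_off Hc)).
Qed.

Lemma O_SR_B_of_contains (U : finType) (f : rel U) (u0 : U) :
  contains_subgraph (V_SR e) (MMD e) f -> (forall u, has_cherry_avoiding f u) ->
  O_SR e = Outcome_B.
Proof.
move=> Hsub /(contains_cherry_avoiding u0 Hsub) Hav; have [h _] := Hsub.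
have [a [b [c /andP[/breaker_wins_B_game HB _]]]] := Hav (h u0).
by rewrite /O_SR (negbTE (breaker_wins_M_game (h u0) Hav)) (negbTE HB).
Qed.

Lemma O_SR_M_deg_le1 : O_SR e = Outcome_M -> forall a b c, MMD e a b -> MMD e a c -> b = c.
Proof.
rewrite /O_SR; case HB: (maker_wins_B_game e); last by case: maker_wins_M_game.
move=> _ a b c Hab Hac; apply/eqP; move: HB; apply: contraTT => Hbc.
by apply: (@breaker_wins_B_game a b c); rewrite /cherry Hab Hac.
Qed.
End StrongResolvingGame.

Lemma cycle3_deg_le1_off : deg_le1_off (cycle_rel 3) [set ord0].
Proof. by move=> a b d; rewrite !inE -!val_eqE /=; move: a b d; do 3 case=> [[|[|[|?]]] ?]. Qed.

Lemma path3_deg_le1_off : deg_le1_off (path_rel 3) [set Ordinal (isT : 1 < 3)].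
Proof. by move=> a b d; rewrite !inE -!val_eqE /=; move: a b d; do 3 case=> [[|[|[|?]]] ?]. Qed.

Lemma path4_deg_le1_off : deg_le1_off (path_rel 4) [set Ordinal (isT : 1 < 4)].
Proof. by move=> a b d; rewrite !inE -!val_eqE /=; move: a b d; do 3 case=> [[|[|[|[|?]]]] ?]. Qed.

Lemma path5_deg_le1_off : deg_le1_off (path_rel 5) [set Ordinal (isT : 2 < 5)].
Proof.
by move=> a b d; rewrite !inE -!val_eqE /=; move: a b d; do 3 case=> [[|[|[|[|[|?]]]]] ?].
Qed.

Ltac ord_solve :=
  rewrite /cherry /complete_rel /cycle_rel /path_rel ?inE -!val_eqE /= ?inordK //; lia.

Lemma cycle3_cherry : cherry (cycle_rel 3) (inord 1) ord0 (inord 2).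
Proof. by ord_solve. Qed.

Lemma path_cherry n : cherry (path_rel n.+3) (inord 1) ord0 (inord 2).
Proof. by ord_solve. Qed.

Lemma complete_cherry_avoiding n : 3 < n -> forall u : 'I_n, has_cherry_avoiding (complete_rel n) u.
Proof.
case: n => [|[|[|[|n]]]] // _ u; case: u => [[|[|[|i]]] Hi].
- by exists (inord 1), (inord 2), (inord 3); ord_solve.
- by exists (inord 0), (inord 2), (inord 3); ord_solve.
- by exists (inord 0), (inord 1), (inord 3); ord_solve.
- by exists (inord 0), (inord 1), (inord 2); ord_solve.
Qed.

Lemma cycle_cherry_avoiding n : 3 < n -> forall u : 'I_n, has_cherry_avoiding (cycle_rel n) u.
Proof.
case: n => [|[|[|[|n]]]] // _ u; case: u => [[|[|[|i]]] Hi].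
- by exists (inord 2), (inord 1), (inord 3); ord_solve.
- by exists (inord n.+3), (inord n.+2), (inord 0); ord_solve.
- by exists (inord 0), (inord 1), (inord n.+3); ord_solve.
- by exists (inord 1), (inord 0), (inord 2); ord_solve.
Qed.

Lemma path_cherry_avoiding n : 5 < n -> forall u : 'I_n, has_cherry_avoiding (path_rel n) u.
Proof.
move=> Hn u; have lt6 k : k < 6 -> k < n by move=> Hk; apply: leq_trans Hn.
case: u => [i Hi]; case: (leqP 3 i) => Hi3.
- by exists (Ordinal (lt6 1 isT)), (Ordinal (lt6 0 isT)), (Ordinal (lt6 2 isT)); ord_solve.
- by exists (Ordinal (lt6 4 isT)), (Ordinal (lt6 3 isT)), (Ordinal (lt6 5 isT)); ord_solve.
Qed.

Lemma cycles_paths_cherry_avoiding x y : 1 < x + y -> forall u,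
  has_cherry_avoiding (union_rel (copies_rel x (cycle_rel 3)) (copies_rel y (path_rel 3))) u.
Proof.
move=> Hxy [p|q].
- apply: union_cherry_avoiding_inl; case: y Hxy => [|y] Hxy.
    by left; apply: copies_cherry_avoiding cycle3_cherry _; rewrite -(addn0 x).
  by right; do 3 eexists; apply: (copies_cherry ord0 (path_cherry 0)).
- apply: union_cherry_avoiding_inr; case: x Hxy => [|x] Hxy.
    by left; apply: copies_cherry_avoiding (path_cherry 0) _.
  by right; do 3 eexists; apply: (copies_cherry ord0 cycle3_cherry).
Qed.

Theorem mainTheorem3 (T : finType) (e : rel T) :
  simple_graph e -> connected_graph e -> 2 <= #|T| ->
  (* (a) *)
  (O_SR e = Outcome_M <->
     exists x, 0 < x /\ iso_to (V_SR e) (MMD e) (matching_rel x))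
  /\
  (* (b) *)
  (forall x : nat,
     (iso_to (V_SR e) (MMD e) (union_rel (cycle_rel 3) (matching_rel x)) \/
      iso_to (V_SR e) (MMD e) (union_rel (path_rel 3) (matching_rel x)) \/
      iso_to (V_SR e) (MMD e) (union_rel (path_rel 4) (matching_rel x)) \/
      iso_to (V_SR e) (MMD e) (union_rel (path_rel 5) (matching_rel x))) ->
     O_SR e = Outcome_N)
  /\
  (* (c) *)
  (((exists m, 4 <= m /\
       (contains_subgraph (V_SR e) (MMD e) (complete_rel m) \/
        contains_subgraph (V_SR e) (MMD e) (cycle_rel m) \/
        contains_subgraph (V_SR e) (MMD e) (path_rel (m + 2)))) \/
    (exists x y, 2 <= x + y /\
       contains_subgraph (V_SR e) (MMD e)
         (union_rel (copies_rel x (cycle_rel 3)) (copies_rel y (path_rel 3))))) ->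
   O_SR e = Outcome_B).

Proof.
move=> [esym _] econ H2; split; [|split].
- split=> [/(O_SR_M_deg_le1 esym econ) Hdeg|[x [_ Hiso]]].
    have /card_gt1P[u [v [_ _ /(MMD_geodesics esym econ)[a [b [Hab _ _]]]]]] := H2.
    exact: matching_iso (MMD_sym e) (MMD_irr e) Hdeg _ _ Hab.
  by apply: (O_SR_M_of_iso esym econ Hiso); exact: matching_deg_le1_off.
- move=> x [H|[H|[H|H]]].
  + exact: (O_SR_N_of_union_matching esym econ H cycle3_cherry cycle3_deg_le1_off).
  + exact: (O_SR_N_of_union_matching esym econ H (path_cherry 0) path3_deg_le1_off).
  + exact: (O_SR_N_of_union_matching esym econ H (path_cherry 1) path4_deg_le1_off).
  + exact: (O_SR_N_of_union_matching esym econ H (path_cherry 2) path5_deg_le1_off).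
- case=> [[m [Hm H]]|[x [y [Hxy H]]]].
    have Hm0 : 0 < m by lia.
    have Hp : 5 < m + 2 by lia.
    case: H => [H|[H|H]].
    + exact: (O_SR_B_of_contains esym econ (Ordinal Hm0) H (complete_cherry_avoiding Hm)).
    + exact: (O_SR_B_of_contains esym econ (Ordinal Hm0) H (cycle_cherry_avoiding Hm)).
    + exact: (O_SR_B_of_contains esym econ (Ordinal Hp) H (path_cherry_avoiding Hp)).
  have u0 : ('I_x * 'I_3) + ('I_y * 'I_3).
    case: (posnP x) => [x0|/Ordinal i]; last exact: inl (i, ord0).
    have /Ordinal j : 0 < y by lia.
    exact: inr (j, ord0).
  exact: (O_SR_B_of_contains esym econ u0 H (cycles_paths_cherry_avoiding Hxy)).
Qed.
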